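(* Let $k$ be a real constant and, on the region $x^2-y^2>0$, let $V(x,y)=k(x^2-y^2)^{-2/3}$. With $L=x\dot y-y\dot x$, the function $$J=(\dot y^2-\dot x^2)L+4V(x,y)\,(y\dot x+x\dot y)$$ is a first integral of $\ddot x=-V_{,x}$, $\ddot y=-V_{,y}$.
   Context: A first integral is a function of $(t,x,y,\dot x,\dot y)$ whose total time derivative vanishes along every solution of the given equations of motion. *)

From Stdlib Require Import Reals.
From Coquelicot Require Import Coquelicot.
Open Scope R_scope.

(* Potential V(x,y) = k (x^2 - y^2)^(-2/3), meaningful on x^2 - y^2 > 0
   (Rpower a b = exp (b * ln a), the real power for a > 0). *)
Definition V (k x y : R) : R := k * Rpower (x ^ 2 - y ^ 2) (- (2 / 3)).

Definition Lmom (x y vx vy : R) : R := x * vy - y * vx.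

Definition J (k x y vx vy : R) : R :=
  (vy ^ 2 - vx ^ 2) * Lmom x y vx vy + 4 * V k x y * (y * vx + x * vy).

(** The potential depends on (x, y) only through S = x^2 - y^2 and is
    homogeneous in S of degree -2/3, so W := dV/dS = -(2/3) V / S.  The force
    is then (xddot, yddot) = (-2 x W, 2 y W), and along a trajectory
    dV/dt = 2 W (x xdot - y ydot).  Substituting into dJ/dt and replacing V by
    -(3/2) S W, every term becomes W times a polynomial in x, y, xdot, ydot,
    and that polynomial cancels. *)

From Stdlib Require Import Reals Lra.
From Coquelicot Require Import Coquelicot.
Open Scope R_scope.

Lemma is_derive_Rpower_comp (e t df : R) (f : R -> R) :
  0 < f t -> is_derive f t df ->
  is_derive (fun s => Rpower (f s) e) t (e * Rpower (f t) e / f t * df).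
Proof.
  intros Hpos Hf.
  replace (e * Rpower (f t) e / f t * df) with (df * (e * Rpower (f t) (e - 1))).
  - apply (is_derive_comp (fun u => Rpower u e) f); [|exact Hf].
    apply is_derive_Reals, derivable_pt_lim_power, Hpos.
  - unfold Rminus; rewrite Rpower_plus, Rpower_Ropp, Rpower_1 by exact Hpos.
    field; lra.
Qed.

Definition dV_dS (k x y : R) : R := - (2 / 3) * V k x y / (x ^ 2 - y ^ 2).

Lemma is_derive_V_comp (k t df dg : R) (f g : R -> R) :
  0 < f t ^ 2 - g t ^ 2 -> is_derive f t df -> is_derive g t dg ->
  is_derive (fun s => V k (f s) (g s)) t
    (2 * dV_dS k (f t) (g t) * (f t * df - g t * dg)).
Proof.
  intros HS Hf Hg.
  assert (HdS : is_derive (fun s => f s ^ 2 - g s ^ 2) t (2 * (f t * df - g t * dg))).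
  { auto_derive.
    - split; [exists df; exact Hf | split; [exists dg; exact Hg | exact I]].
    - rewrite (is_derive_unique (fun s : R => f s) _ _ Hf),
              (is_derive_unique (fun s : R => g s) _ _ Hg).
      ring. }
  replace (2 * dV_dS k (f t) (g t) * (f t * df - g t * dg))
    with (k * (- (2 / 3) * Rpower (f t ^ 2 - g t ^ 2) (- (2 / 3)) / (f t ^ 2 - g t ^ 2)
               * (2 * (f t * df - g t * dg)))).
  - apply is_derive_scal, (is_derive_Rpower_comp _ _ _ (fun s => f s ^ 2 - g s ^ 2));
      assumption.
  - unfold dV_dS, V; field; lra.
Qed.

Lemma Derive_V_x (k x y : R) :
  0 < x ^ 2 - y ^ 2 -> Derive (fun u => V k u y) x = 2 * dV_dS k x y * x.
Proof.
  intros HS; apply is_derive_unique.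
  replace (2 * dV_dS k x y * x) with (2 * dV_dS k x y * (x * 1 - y * 0)) by ring.
  apply (is_derive_V_comp k x 1 0 (fun u => u) (fun _ => y)).
  - exact HS.
  - apply (@is_derive_id R_AbsRing).
  - apply (is_derive_const y).
Qed.

Lemma Derive_V_y (k x y : R) :
  0 < x ^ 2 - y ^ 2 -> Derive (fun w => V k x w) y = - (2 * dV_dS k x y * y).
Proof.
  intros HS; apply is_derive_unique.
  replace (- (2 * dV_dS k x y * y)) with (2 * dV_dS k x y * (x * 0 - y * 1)) by ring.
  apply (is_derive_V_comp k y 0 1 (fun _ => x) (fun w => w)).
  - exact HS.
  - apply (is_derive_const x).
  - apply (@is_derive_id R_AbsRing).
Qed.

Lemma is_derive_J_comp (k t ax ay dV : R) (x y vx vy : R -> R) :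
  is_derive x t (vx t) -> is_derive y t (vy t) ->
  is_derive vx t ax -> is_derive vy t ay ->
  is_derive (fun s => V k (x s) (y s)) t dV ->
  is_derive (fun s => J k (x s) (y s) (vx s) (vy s)) t
    (2 * (vy t * ay - vx t * ax) * Lmom (x t) (y t) (vx t) (vy t)
     + (vy t ^ 2 - vx t ^ 2) * (x t * ay - y t * ax)
     + 4 * dV * (y t * vx t + x t * vy t)
     + 4 * V k (x t) (y t) * (2 * vx t * vy t + y t * ax + x t * ay)).
Proof.
  intros Hx Hy Hvx Hvy HV.
  set (Vx := fun s => V k (x s) (y s)) in HV.
  change (is_derive (fun s => (vy s ^ 2 - vx s ^ 2) * (x s * vy s - y s * vx s)
                              + 4 * Vx s * (y s * vx s + x s * vy s)) t
    (2 * (vy t * ay - vx t * ax) * Lmom (x t) (y t) (vx t) (vy t)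
     + (vy t ^ 2 - vx t ^ 2) * (x t * ay - y t * ax)
     + 4 * dV * (y t * vx t + x t * vy t)
     + 4 * Vx t * (2 * vx t * vy t + y t * ax + x t * ay))).
  auto_derive.
  - repeat split; eexists; eassumption.
  - rewrite (is_derive_unique (fun s : R => x s) _ _ Hx),
            (is_derive_unique (fun s : R => y s) _ _ Hy),
            (is_derive_unique (fun s : R => vx s) _ _ Hvx),
            (is_derive_unique (fun s : R => vy s) _ _ Hvy),
            (is_derive_unique (fun s : R => Vx s) _ _ HV).
    unfold Lmom; ring.
Qed.

Lemma J_rate_cancels (x y vx vy v w : R) :
  3 * (x ^ 2 - y ^ 2) * w = - 2 * v ->
  2 * (vy * (2 * w * y) - vx * (- (2 * w * x))) * Lmom x y vx vy
  + (vy ^ 2 - vx ^ 2) * (x * (2 * w * y) - y * (- (2 * w * x)))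
  + 4 * (2 * w * (x * vx - y * vy)) * (y * vx + x * vy)
  + 4 * v * (2 * vx * vy + y * (- (2 * w * x)) + x * (2 * w * y)) = 0.
Proof.
  intros Hv.
  replace (4 * v) with (- 2 * (- 2 * v)) by ring.
  rewrite <- Hv; unfold Lmom; ring.
Qed.

Theorem mainTheorem5 (k a b : R) (x y vx vy : R -> R) :
  (forall t, a < t < b ->
     0 < x t ^ 2 - y t ^ 2 /\
     is_derive x t (vx t) /\
     is_derive y t (vy t) /\
     is_derive vx t (- Derive (fun u => V k u (y t)) (x t)) /\
     is_derive vy t (- Derive (fun w => V k (x t) w) (y t))) ->
  forall t, a < t < b ->
    is_derive (fun s => J k (x s) (y s) (vx s) (vy s)) t 0.
Proof.
  intros Hsol t Ht.
  destruct (Hsol t Ht) as (HS & Hx & Hy & Hvx & Hvy).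
  rewrite Derive_V_x in Hvx by exact HS.
  rewrite Derive_V_y, Ropp_involutive in Hvy by exact HS.
  set (W := dV_dS k (x t) (y t)) in *.
  rewrite <- (J_rate_cancels (x t) (y t) (vx t) (vy t) (V k (x t) (y t)) W).
  - apply is_derive_J_comp; [exact Hx | exact Hy | exact Hvx | exact Hvy |].
    apply is_derive_V_comp; assumption.
  - unfold W, dV_dS; field; lra.
Qed.
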